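(* Let $M$ be a Spiky CRMDP with underlying MDP $\dot M = (\mathcal{S},\mathcal{A},T,R)$, and define the reward lower Lipschitz bound $\underline{R}(x) = \max_{y\in\mathcal{S}_n}\big(R(y) - d(x,y)\big)$ for $x\in\mathcal{S}$. Suppose there exists a policy $\pi^*$ that is optimal for $\dot M$ (i.e. with respect to the reward $R$) such that the trajectories $\tau\sim\pi^*$ it generates contain no corrupt states. Then every policy that is optimal with respect to the reward function $\underline{R}$ is also optimal for $\dot M$ (i.e. with respect to $R$).
   Context: A Corrupt Reward MDP (CRMDP) is a finite-state Markov decision process $(\mathcal{S}, \mathcal{A}, T, R)$ (the underlying MDP) with state set $\mathcal{S}$, action set $\mathcal{A}$, transition function $T$ and (true) reward function $R\colon \mathcal{S}\to\mathbb{R}$, together with an additional corrupt reward function $C\colon \mathcal{S} \to \mathbb{R}$. The set of non-corrupt states is $\mathcal{S}_n = \{x \in \mathcal{S} : R(x) = C(x)\}$ and the set of corrupt states is $\mathcal{S}_c = \mathcal{S}\setminus \mathcal{S}_n$. A Spiky CRMDP is a CRMDP together with a metric $d\colon \mathcal{S}\times\mathcal{S}\to[0,\infty)$ and a function $\mathrm{LV}\colon \mathcal{P}(\mathcal{S})\times\mathcal{S}\to[0,\infty)$, written $(A,x)\mapsto \mathrm{LV}_A(x)$, non-decreasing with respect to set inclusion in $A$, such that: (1) $\mathcal{S}_n$ is nonempty; (2) $|R(x)-R(y)|\le d(x,y)$ for all $x,y\in\mathcal{S}$; (3) for every $x\in\mathcal{S}_c$, $\mathrm{LV}_{\mathcal{S}_n}(x)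 > \sup_{y\in\mathcal{S}_n}\mathrm{LV}_{\mathcal{S}}(y)$. A policy $\pi$ generates random trajectories $\tau\sim\pi$, viewed as (finite) sequences of states; for a reward function $r\colon\mathcal{S}\to\mathbb{R}$, the value of $\pi$ is $\mathbb{E}_{\tau\sim\pi}\sum_{x\in\tau} r(x)$ (sum over the states of the trajectory, with multiplicity), assumed finite, and $\pi$ is optimal with respect to $r$ if it maximizes this value over all policies. *)

From HB Require Import structures.
From mathcomp Require Import all_boot all_order all_algebra.
From mathcomp Require Import all_classical all_reals.
From mathcomp Require Import ereal esum numfun.
Set Implicit Arguments. Unset Strict Implicit. Unset Printing Implicit Defensive.
Import Order.TTheory GRing.Theory Num.Theory.
Local Open Scope ring_scope.

Section CRMDP.
Variables (R : realType) (S A : finType).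

(* A policy: history-dependent stochastic policy; [pi h a] is the probability
   of choosing action [a] after the state history [h] (last element = current state). *)
Definition is_policy (pi : seq S -> A -> R) : Prop :=
  (forall h a, 0 <= pi h a) /\ (forall h, \sum_(a : A) pi h a = 1).

(* Initial distribution [mu] and transition kernel [T x a : option S -> R];
   [T x a None] is the probability that the episode ends after taking [a] in [x]. *)
Definition is_mdp (mu : S -> R) (T : S -> A -> option S -> R) : Prop :=
  (forall x, 0 <= mu x) /\ \sum_(x : S) mu x = 1 /\
  (forall x a o, 0 <= T x a o) /\ (forall x a, \sum_(o : option S) T x a o = 1).

Fixpoint traj_prob_from (T : S -> A -> option S -> R) (pi : seq S -> A -> R)
    (hist : seq S) (x : S) (rest : seq S) : R :=
  match rest with
  | [::] => \sum_(a : A) pi hist a * T x a None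
  | y :: rest' => (\sum_(a : A) pi hist a * T x a (Some y)) *
                  traj_prob_from T pi (rcons hist y) y rest'
  end.

Definition traj_prob (mu : S -> R) (T : S -> A -> option S -> R)
    (pi : seq S -> A -> R) (tau : seq S) : R :=
  match tau with
  | [::] => 0
  | x0 :: rest => mu x0 * traj_prob_from T pi [:: x0] x0 rest
  end.

Definition value_integrand mu T pi (r : S -> R) (tau : seq S) : \bar R :=
  ((traj_prob mu T pi tau) * \sum_(x <- tau) r x)%:E.

Definition value mu T pi (r : S -> R) : \bar R :=
  (\esum_(tau in [set: seq S]) (value_integrand mu T pi r)^\+ tau -
   \esum_(tau in [set: seq S]) (value_integrand mu T pi r)^\- tau)%E.

Definition optimal mu T (r : S -> R) (pi : seq S -> A -> R) : Prop :=
  is_policy pi /\ forall pi', is_policy pi' -> (value mu T pi' r <= value mu T pi r)%E.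

Definition is_metric (d : S -> S -> R) : Prop :=
  (forall x y, 0 <= d x y) /\ (forall x y, d x y = 0 <-> x = y) /\
  (forall x y, d x y = d y x) /\ (forall x y z, d x z <= d x y + d y z).

Definition noncorrupt (rew C : S -> R) : {set S} := [set x | rew x == C x].

(* Spiky CRMDP conditions (1)-(3) together with the requirements on d and LV.
   sup over the finite nonempty set S_n is a max, so condition (3) says that
   LV_{S_n}(x) exceeds LV_S(y) for every y in S_n. *)
Definition spiky (rew C : S -> R) (d : S -> S -> R) (LV : {set S} -> S -> R) : Prop :=
  is_metric d /\
  (forall (B : {set S}) x, 0 <= LV B x) /\
  (forall (B1 B2 : {set S}) x, B1 \subset B2 -> LV B1 x <= LV B2 x) /\
  noncorrupt rew C != finset.set0 /\
  (forall x y, `|rew x - rew y| <= d x y) /\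
  (forall x y, x \notin noncorrupt rew C -> y \in noncorrupt rew C ->
     LV (noncorrupt rew C) x > LV [set: S] y).

Definition Rlow (rew C : S -> R) (d : S -> S -> R) (x : S) : R :=
  sup [set rew y - d x y | y in [set y | y \in noncorrupt rew C]]%classic.

End CRMDP.

From HB Require Import structures.
From mathcomp Require Import all_boot all_order all_algebra.
From mathcomp Require Import all_classical all_reals.
From mathcomp Require Import ereal esum numfun.
Set Implicit Arguments. Unset Strict Implicit. Unset Printing Implicit Defensive.
Import Order.TTheory GRing.Theory Num.Theory.
Local Open Scope ring_scope.

(* The Lipschitz bound gives [Rlow <= R] everywhere, with equality on the
   non-corrupt states (take y = x in the max).  Hence the value of every policy
   under [Rlow] is at most its value under [R], while the two values of the
   optimal policy pi*, which only visits non-corrupt states, coincide.  For an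
   [Rlow]-optimal pi and any pi',
   V_R(pi') <= V_R(pi* ) = V_Rlow(pi* ) <= V_Rlow(pi) <= V_R(pi). *)

Lemma le_esum_funepos_funeneg (R : realType) (I : choiceType) (D : set I)
    (F G : I -> \bar R) :
  (forall i, (F i <= G i)%E) ->
  (\esum_(i in D) F^\+ i - \esum_(i in D) F^\- i <=
   \esum_(i in D) G^\+ i - \esum_(i in D) G^\- i)%E.
Proof.
move=> FG; apply: leeB; apply: le_esum => i _.
- by rewrite !funeposE ge_max !le_max lexx orbT andbT FG.
- by rewrite !funenegE ge_max !le_max lexx orbT andbT leeN2 FG.
Qed.

Section Value.
Variables (R : realType) (S A : finType).
Variables (mu : S -> R) (T : S -> A -> option S -> R).
Hypothesis mdpT : is_mdp mu T.

Lemma traj_prob_from_ge0 (pi : seq S -> A -> R) :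
  is_policy pi -> forall rest hist x, 0 <= traj_prob_from T pi hist x rest.
Proof.
case: mdpT => _ [_ [T_ge0 _]] [pi_ge0 _].
have step_ge0 hist x o : 0 <= \sum_(a : A) pi hist a * T x a o.
  by apply: sumr_ge0 => a _; apply: mulr_ge0.
by elim=> [|y rest IH] hist x //=; apply: mulr_ge0.
Qed.

Lemma traj_prob_ge0 (pi : seq S -> A -> R) :
  is_policy pi -> forall tau, 0 <= traj_prob mu T pi tau.
Proof.
case: mdpT => mu_ge0 _ pi_policy [|x rest] //=.
by apply: mulr_ge0 => //; apply: traj_prob_from_ge0.
Qed.

Lemma le_value (pi : seq S -> A -> R) (r1 r2 : S -> R) :
  is_policy pi -> (forall x, r1 x <= r2 x) ->
  (value mu T pi r1 <= value mu T pi r2)%E.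
Proof.
move=> pi_policy r12; apply: le_esum_funepos_funeneg => tau.
rewrite lee_fin ler_wpM2l ?traj_prob_ge0 //.
by apply: ler_sum => x _.
Qed.

Lemma eq_value_on_support (pi : seq S -> A -> R) (r1 r2 : S -> R) :
  is_policy pi ->
  (forall tau, 0 < traj_prob mu T pi tau -> {in tau, r1 =1 r2}) ->
  value mu T pi r1 = value mu T pi r2.
Proof.
move=> pi_policy r12; rewrite /value.
suff -> : value_integrand mu T pi r1 = value_integrand mu T pi r2 by [].
apply/funext => tau; rewrite /value_integrand.
have [tau_pos|] := ltP 0 (traj_prob mu T pi tau).
  by rewrite (eq_big_seq _ (r12 _ tau_pos)).
move=> tau_le0; have -> : traj_prob mu T pi tau = 0.
  by apply/eqP; rewrite eq_le tau_le0 traj_prob_ge0.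
by rewrite !mul0r.
Qed.

End Value.

Section LowerLipschitzBound.
Variables (R : realType) (S : finType) (rew C : S -> R) (d : S -> S -> R).
Hypothesis rew_lipschitz : forall x y, `|rew x - rew y| <= d x y.

Let candidates x := [set rew y - d x y | y in [set y | y \in noncorrupt rew C]]%classic.

Lemma Rlow_candidates_ub x : ubound (candidates x) (rew x).
Proof.
move=> _ [y _ <-]; rewrite lerBlDr addrC -lerBlDr.
by apply: le_trans (rew_lipschitz x y); rewrite distrC ler_norm.
Qed.

Lemma Rlow_le x : noncorrupt rew C != finset.set0 -> Rlow rew C d x <= rew x.
Proof.
case/set0Pn => y y_nc; apply: ge_sup; last exact: Rlow_candidates_ub.
by exists (rew y - d x y); exists y.
Qed.

Lemma Rlow_noncorrupt x : d x x = 0 -> x \in noncorrupt rew C ->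
  Rlow rew C d x = rew x.
Proof.
move=> dxx0 x_nc; apply/eqP; rewrite eq_le Rlow_le; last by apply/set0Pn; exists x.
rewrite -[leLHS]subr0 -dxx0; apply: ub_le_sup; last by exists x.
by exists (rew x); exact: Rlow_candidates_ub.
Qed.

End LowerLipschitzBound.

Theorem proposition3 (R : realType) (S A : finType)
  (mu : S -> R) (T : S -> A -> option S -> R) (rew C : S -> R)
  (d : S -> S -> R) (LV : {set S} -> S -> R) :
  is_mdp mu T ->
  spiky rew C d LV ->
  (* every policy generates finite trajectories almost surely *)
  (forall pi, is_policy pi ->
     (\esum_(tau in [set: seq S]) (traj_prob mu T pi tau)%:E = 1)%E) ->
  (* values are finite (for both reward functions considered) *)
  (forall pi, is_policy pi ->
     summable [set: seq S] (value_integrand mu T pi rew) /\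
     summable [set: seq S] (value_integrand mu T pi (Rlow rew C d))) ->
  (exists pistar, optimal mu T rew pistar /\
     forall tau, 0 < traj_prob mu T pistar tau ->
       forall x, x \in tau -> x \in noncorrupt rew C) ->
  forall pi, optimal mu T (Rlow rew C d) pi -> optimal mu T rew pi.
Proof.
move=> mdpT [[_ [d_eq0 _]] [_ [_ [nc_neq0 [lipschitz _]]]]] _ _.
move=> [pistar [[pistar_policy pistar_opt] pistar_nc]] pi [pi_policy pi_opt].
have Rlow_le_rew x : Rlow rew C d x <= rew x := Rlow_le lipschitz x nc_neq0.
have pistar_values : value mu T pistar rew = value mu T pistar (Rlow rew C d).
  apply: eq_value_on_support => // tau tau_pos x /(pistar_nc _ tau_pos) x_nc.
  by rewrite Rlow_noncorrupt // (proj2 (d_eq0 x x)).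
split=> // pi' pi'_policy.
apply: le_trans (pistar_opt _ pi'_policy) _; rewrite pistar_values.
apply: le_trans (pi_opt _ pistar_policy) _.
exact: le_value.
Qed.
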